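(* Let $\Gamma$ be a connected rooted Eisenbud–Neumann diagram satisfying: (a) all near weights are positive and no far weight is zero; (b) if the far weight at a node $v$ is negative then the far weights at all nodes beyond $v$ are negative; (c) all vertex multiplicities are positive. If $\Gamma$ has $\nu\ge2$ arrowheads $L_1,\dots,L_\nu$, then $\mathrm{lk}(L_i,L_i)<0$ for every $i$.
   Context: A rooted Eisenbud–Neumann (splice) diagram is a finite tree with a distinguished root vertex, whose vertices are nodes, leaves (valency one, not arrowheads) and arrowhead vertices $L_1,\dots,L_\nu$ carrying multiplicities $n_1,\dots,n_\nu$; at each node every incident edge carries a weight at that node (omitted weights equal $1$). At a node $v$, the weight on the edge leading from $v$ towards the root is the far weight at $v$; the weights at $v$ on the other incident edges are near weights at $v$. A node $w$ is beyond a node $v$ if the geodesic from $w$ to the root contains $v$. For distinct vertices $v,w$ (nodes or arrowheads), $\mathrm{lk}(v,w)$ is the product of all edge weights adjacent to but not on the geodesic between $v$ and $w$. The multiplicity of a non-arrowhead vertex $v$ is $M_v=\sum_j n_j\,\mathrm{lk}(v,L_j)$; the multiplicity of $L_j$ is $n_j$. The self-linking $\mathrm{lk}(L_i,L_i)$ is defined by $n_i\,\mathrm{lk}(L_i,L_i)=-\sum_{j\ne i}n_j\,\mathrm{lk}(L_i,L_j)$. *)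

From HB Require Import structures.
From mathcomp Require Import all_boot all_order all_algebra.
Set Implicit Arguments. Unset Strict Implicit. Unset Printing Implicit Defensive.
Import Order.TTheory GRing.Theory Num.Theory.

(* A rooted tree on a finite vertex type V is given by a root r and a parent
   map par with par r = r such that iterating par from any vertex reaches r
   (this forces the graph with edges {x, par x}, x <> r, to be a tree,
   automatically connected). *)
Definition rooted_tree (V : finType) (par : V -> V) (r : V) : Prop :=
  par r = r /\ forall v : V, exists k : nat, iter k par v = r.

Definition adj (V : finType) (par : V -> V) (x y : V) : bool :=
  (x != y) && ((par x == y) || (par y == x)).

Definition valency (V : finType) (par : V -> V) (x : V) : nat :=
  #|[set y | adj par x y]|.

(* ancestors of v: the vertices on the geodesic from v to the root
   (including v itself).  "w is beyond v" iff v \in anc par w. *)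
Definition anc (V : finType) (par : V -> V) (v : V) : {set V} :=
  [set x | [exists k : 'I_#|V|, iter k par v == x]].

Definition is_node (V : finType) (par : V -> V) (arr : {set V}) (x : V) : bool :=
  (x \notin arr) && (valency par x != 1%N).

(* the edge {x,y} lies on the geodesic between v and w: its child endpoint c
   (the one farther from the root) is an ancestor of exactly one of v, w *)
Definition geo_edge (V : finType) (par : V -> V) (v w x y : V) : bool :=
  adj par x y &&
  (let c := if par x == y then x else y in (c \in anc par v) != (c \in anc par w)).

Definition geo_vert (V : finType) (par : V -> V) (v w x : V) : bool :=
  [|| x == v, x == w | [exists y, geo_edge par v w x y]].

(* wt x y = the weight at node x on the edge {x,y} *)
Definition lk (V : finType) (par : V -> V) (arr : {set V}) (wt : V -> V -> int)
    (v w : V) : int :=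
  \prod_(x | is_node par arr x && geo_vert par v w x)
     \prod_(y | adj par x y && ~~ geo_edge par v w x y) wt x y.

(* multiplicity of a non-arrowhead vertex v; mult j = n_j for arrowheads j *)
Definition vmult (V : finType) (par : V -> V) (arr : {set V}) (wt : V -> V -> int)
    (mult : V -> int) (v : V) : int :=
  \sum_(j in arr) mult j * lk par arr wt v j.

(* self-linking of an arrowhead i, defined by
   n_i lk(L_i,L_i) = - sum_{j <> i} n_j lk(L_i,L_j) *)
Definition selflk (V : finType) (par : V -> V) (arr : {set V}) (wt : V -> V -> int)
    (mult : V -> int) (i : V) : rat :=
  - ((\sum_(j in arr | j != i) mult j * lk par arr wt i j)%:~R) / (mult i)%:~R.

From HB Require Import structures.
From mathcomp Require Import all_boot all_order all_algebra.
Import Order.TTheory GRing.Theory Num.Theory.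
Set Implicit Arguments. Unset Strict Implicit.

(* Let v be the node adjacent to the arrowhead L_i.  If the far weight at v is
   positive, condition (b) makes every far weight between L_i and the root
   positive, so each lk(L_i, L_j) is a product of positive weights and
   n_i lk(L_i, L_i) = - sum_{j <> i} n_j lk(L_i, L_j) < 0.  If it is negative,
   then lk(v, L_j) = w lk(L_i, L_j) for j <> i, where w > 0 is the weight at v
   towards L_i, while lk(v, L_i) < 0; hence M_v > 0 forces
   sum_{j <> i} n_j lk(L_i, L_j) > 0 again. *)

Section Ancestors.
Variables (V : finType) (par : V -> V).

Lemma ancP v x : reflect (exists k, iter k par v = x) (x \in anc par v).
Proof.
rewrite inE; apply: (iffP existsP) => [[k /eqP <-]|[k <-]]; first by exists k.
have con := fconnect_iter par k v.
have lt : findex par v (iter k par v) < #|V|.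
  exact: leq_trans (findex_max con) (max_card _).
by exists (Ordinal lt); rewrite /= iter_findex.
Qed.

Lemma anc_self v : v \in anc par v.
Proof. by apply/ancP; exists 0. Qed.

Lemma ancE v x : (x \in anc par v) = (x == v) || (x \in anc par (par v)).
Proof.
apply/ancP/orP => [[[|k] <-]|[/eqP->|/ancP[k <-]]].
- by left.
- by right; apply/ancP; exists k; rewrite -iterSr.
- by exists 0.
- by exists k.+1; rewrite iterSr.
Qed.

Lemma anc_par v x : x \in anc par v -> par x \in anc par v.
Proof. by move/ancP=> [k <-]; apply/ancP; exists k.+1. Qed.

End Ancestors.

Section RootedTree.
Variables (V : finType) (par : V -> V) (r : V).
Hypothesis Htree : rooted_tree par r.

Lemma anc_root x : x \in anc par r -> x = r.
Proof. by case: Htree => Hr _ /ancP[k <-]; rewrite iter_fix. Qed.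

Lemma notin_anc_par v : v != r -> v \notin anc par (par v).
Proof.
move=> vr; apply/negP => /ancP[k Hk].
have period m : iter (m * k.+1) par v = v.
  by elim: m => // m IH; rewrite mulSn iterD IH iterSr.
case: Htree => Hr /(_ v)[K HK].
have := period K; rewrite -(subnK (leq_pmulr K (ltn0Sn k))) iterD HK iter_fix //.
by move=> rv; rewrite rv eqxx in vr.
Qed.

Lemma par_neq v : v != r -> par v != v.
Proof.
move=> vr; apply: contraNneq (notin_anc_par vr) => ->; exact: anc_self.
Qed.

Lemma par_par_neq v : v != r -> par (par v) != v.
Proof.
move=> vr; apply: contraNneq (notin_anc_par vr) => {1}<-.
exact: anc_par (anc_self par (par v)).
Qed.

Lemma adjC x y : adj par x y = adj par y x.
Proof. by rewrite /adj eq_sym orbC. Qed.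

Lemma adj_par v : v != r -> adj par v (par v).
Proof. by move=> vr; rewrite /adj eq_sym par_neq // eqxx. Qed.

Lemma valency_gt1 x a b : adj par x a -> adj par x b -> a != b -> 1 < valency par x.
Proof.
move=> xa xb ab; apply: leq_trans (_ : #|[set a; b]| <= _); first by rewrite cards2 ab.
by apply/subset_leq_card/subsetP => z; rewrite !inE => /orP[]/eqP->.
Qed.

Lemma leaf_adj v y : v != r -> valency par v = 1 -> adj par v y -> y = par v.
Proof.
move=> vr v1 vy; apply/eqP; apply: contraTT isT => ny.
by have := valency_gt1 vy (adj_par vr) ny; rewrite v1.
Qed.

Lemma leaf_notin_anc v w : v != r -> valency par v = 1 -> w != v -> v \notin anc par w.
Proof.
move=> vr v1 wv; apply/negP => /ancP[[|k] Hk]; first by rewrite -Hk eqxx in wv.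
have {Hk} : par (iter k par w) = v := Hk; set c := iter k par w => Hk.
have cv : c != v by apply: contraNneq (par_neq vr) => {1}<-; rewrite Hk.
have /leaf_adj : adj par v c by rewrite /adj eq_sym cv Hk eqxx orbT.
move=> /(_ vr v1) ce; apply: (negP (notin_anc_par vr)).
by rewrite -ce; apply/ancP; exists 1.
Qed.

End RootedTree.

Section Geodesics.
Variables (V : finType) (par : V -> V).

Lemma geo_edgeE v w x y : geo_edge par v w x y =
  adj par x y && (((if par x == y then x else y) \in anc par v)
                  != ((if par x == y then x else y) \in anc par w)).
Proof. by []. Qed.

Lemma geo_edge_toward_root v w x : adj par x (par x) ->
  geo_edge par v w x (par x) = ((x \in anc par v) != (x \in anc par w)).
Proof. by move=> xpx; rewrite geo_edgeE xpx eqxx. Qed.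

Lemma geo_edge_par v w x y :
  x != v -> y != v -> geo_edge par v w x y = geo_edge par (par v) w x y.
Proof.
move=> xv yv; rewrite !geo_edgeE; congr (_ && _).
have cv : (if par x == y then x else y) != v by case: ifP.
by rewrite (ancE par v) (negbTE cv).
Qed.

Lemma geo_vert_far_anc v w x :
  x != v -> x != w -> geo_vert par v w x -> adj par x (par x) ->
  ~~ geo_edge par v w x (par x) -> x \in anc par v.
Proof.
move=> xv xw; rewrite /geo_vert (negbTE xv) (negbTE xw) /= => /existsP[y].
move=> + xpx; rewrite geo_edge_toward_root // negbK geo_edgeE => /andP[xy] + /eqP same.
case: (eqVneq (par x) y) => [_|pxy]; first by move/negP; case; apply/eqP.
have pyx : par y = x by case/andP: xy => _ /orP[/eqP/eqP|/eqP]; rewrite ?(negbTE pxy).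
case: (boolP (y \in anc par v)) => [/anc_par|_ yw]; first by rewrite pyx.
by rewrite same -pyx; apply: anc_par; case: (y \in anc par w) yw.
Qed.

End Geodesics.

Section Linking.
Variables (V : finType) (par : V -> V) (r : V) (arr : {set V}) (wt : V -> V -> int).
Hypothesis Htree : rooted_tree par r.
Hypothesis Hnear : forall v y, is_node par arr v -> adj par v y -> y != par v ->
  (0 < wt v y)%R.

Lemma node_neq x v : is_node par arr x -> ~~ is_node par arr v -> x != v.
Proof. by move=> xn; apply: contraNneq => <-. Qed.

Lemma leaf_not_node v : valency par v = 1 -> ~~ is_node par arr v.
Proof. by move=> v1; rewrite /is_node v1 eqxx andbF. Qed.

Lemma arr_not_node j : j \in arr -> ~~ is_node par arr j.
Proof. by move=> Hj; rewrite /is_node Hj. Qed.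

Lemma lk_gt0 i j : ~~ is_node par arr i -> ~~ is_node par arr j ->
  (forall x, is_node par arr x -> x != r -> x \in anc par i -> (0 < wt x (par x))%R) ->
  (0 < lk par arr wt i j)%R.
Proof.
move=> ni nj Hfar; apply: prodr_gt0 => x /andP[xn xgeo].
apply: prodr_gt0 => y /andP[xy ygeo].
have [ypx|] := eqVneq y (par x); last exact: Hnear.
rewrite {}ypx in xy ygeo *.
have xr : x != r.
  by apply: contraTneq xy => ->; case: Htree => Hr _; rewrite /adj Hr eqxx.
apply: Hfar => //.
exact: geo_vert_far_anc (node_neq xn ni) (node_neq xn nj) xgeo xy ygeo.
Qed.

Section Leaf.
Variable i : V.
Hypotheses (ir : i != r) (i_leaf : valency par i = 1).
Let v := par i.
Hypothesis vn : is_node par arr v.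

Lemma lk_par_leaf j : j != i -> lk par arr wt v j = (wt v i * lk par arr wt i j)%R.
Proof.
move=> ji.
have ni := leaf_not_node i_leaf.
have vi : adj par v i by rewrite adjC (adj_par Htree).
have pvi : (par v == i) = false by apply/negbTE/(par_par_neq Htree).
have iNj := leaf_notin_anc Htree ir i_leaf ji.
have on_i : geo_edge par i j v i by rewrite geo_edgeE vi pvi anc_self iNj.
have off_v : geo_edge par v j v i = false.
  by rewrite geo_edgeE vi pvi (negbTE (notin_anc_par Htree ir)) (negbTE iNj).
have edge_iv x y : x != i -> x != v -> geo_edge par i j x y = geo_edge par v j x y.
  move=> xi xv; have [->|yi] := eqVneq y i; last exact: geo_edge_par.
  rewrite !geo_edgeE; suff -> : adj par x i = false by [].
  by apply: contraNF xv; rewrite adjC => /(leaf_adj Htree ir i_leaf) ->.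
have vert_iv x : is_node par arr x -> geo_vert par v j x = geo_vert par i j x.
  move=> xn; have [->|xv] := eqVneq x v.
    by rewrite /geo_vert eqxx /=; apply/esym/orP; right; apply/orP; right;
       apply/existsP; exists i.
  rewrite /geo_vert (negbTE (node_neq xn ni)) (negbTE xv) !orFb; congr (_ || _).
  by apply: eq_existsb => y; rewrite edge_iv // (node_neq xn ni).
rewrite /lk (bigD1 v) /=; last by rewrite vn /geo_vert eqxx.
rewrite [in RHS](bigD1 v) /=; last by rewrite vn -(vert_iv v vn) /geo_vert eqxx.
rewrite (bigD1 i) /=; last by rewrite vi off_v.
rewrite !mulrA; congr (_ * _ * _)%R.
  apply: eq_bigl => y; have [->|yi] := eqVneq y i; first by rewrite on_i /= !andbF.
  by rewrite andbT [in RHS]geo_edge_par // (par_neq Htree).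
apply: eq_big => x; first by case xn: (is_node par arr x) => //=; rewrite vert_iv.
move=> /andP[/andP[xn _] xv]; apply: eq_bigl => y.
by rewrite edge_iv // (node_neq xn ni).
Qed.

Lemma lk_par_leaf_self_lt0 : v != r -> (wt v (par v) < 0)%R -> (lk par arr wt v i < 0)%R.
Proof.
move=> vr wneg.
have ni := leaf_not_node i_leaf.
have sep c : ((c \in anc par v) != (c \in anc par i)) = (c == i).
  rewrite (ancE par i c) -/v; have [->|ci] := eqVneq c i; last by case: (c \in anc par v).
  by rewrite (negbTE (notin_anc_par Htree ir)).
rewrite /lk (bigD1 v) /=; last by rewrite vn /geo_vert eqxx.
rewrite [X in (_ * X)%R]big1 ?mulr1; last first.
  move=> x /andP[/andP[xn +] xv]; rewrite /geo_vert (negbTE (node_neq xn ni)) orFb.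
  rewrite (negbTE xv) orFb => /existsP[y].
  rewrite geo_edgeE => /andP[xy]; case: ifP => [_|pxy]; rewrite sep => /eqP E.
    by move: (node_neq xn ni); rewrite E eqxx.
  by move: xy; rewrite /adj pxy E /= => /andP[_ /eqP pix]; rewrite -pix eqxx in xv.
have vpv := adj_par Htree vr.
rewrite (bigD1 (par v)) /=; last first.
  by rewrite vpv geo_edge_toward_root // sep (negbTE (par_neq Htree ir)).
rewrite mulrC pmulr_rlt0 //; apply: prodr_gt0 => y /andP[/andP[vy _] ypv].
exact: Hnear.
Qed.

Lemma vmult_par_leaf (mult : V -> int) : i \in arr ->
  vmult par arr wt mult v = (mult i * lk par arr wt v i +
    wt v i * \sum_(j in arr | j != i) mult j * lk par arr wt i j)%R.
Proof.
move=> Hi; rewrite /vmult (bigD1 i) //=; congr (_ + _)%R; rewrite mulr_sumr.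
by apply: eq_bigr => j /andP[_ ji]; rewrite lk_par_leaf // mulrCA.
Qed.

End Leaf.

Hypothesis Harr_val : forall j, j \in arr -> valency par j = 1.
Hypothesis Hfar : forall v, is_node par arr v -> v != r -> wt v (par v) != 0%R.
Hypothesis Hneg : forall v u, is_node par arr v -> v != r -> (wt v (par v) < 0)%R ->
  is_node par arr u -> u != v -> v \in anc par u -> (wt u (par u) < 0)%R.

Lemma anc_far_gt0_or_par_far_lt0 i : valency par i = 1 ->
  (forall x, is_node par arr x -> x != r -> x \in anc par i -> (0 < wt x (par x))%R) \/
  [/\ i != r, par i != r, is_node par arr (par i) & (wt (par i) (par (par i)) < 0)%R].
Proof.
move=> i_leaf; have ni := leaf_not_node i_leaf.
have anc_par_i x : is_node par arr x -> x \in anc par i -> x \in anc par (par i).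
  by move=> xn; rewrite ancE (negbTE (node_neq xn ni)).
have [ir|ir] := eqVneq i r.
  by left=> x _ xr; rewrite ir => /(anc_root Htree) xr'; rewrite xr' eqxx in xr.
have [vr|vr] := eqVneq (par i) r.
  left=> x xn xr /(anc_par_i x xn); rewrite vr => /(anc_root Htree) xr'.
  by rewrite xr' eqxx in xr.
have vn : is_node par arr (par i).
  have v_gt1 : 1 < valency par (par i).
    apply: valency_gt1 (adj_par Htree vr) _ (par_par_neq Htree ir).
    by rewrite adjC (adj_par Htree).
  rewrite /is_node neq_ltn v_gt1 orbT andbT.
  by apply: contraTN v_gt1 => /Harr_val ->.
have [wneg|wpos] := ltP (wt (par i) (par (par i))) 0%R; first by right.
left=> x xn xr /(anc_par_i x xn) xv.
rewrite lt_def Hfar //=; have [<-//|vx] := eqVneq (par i) x.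
rewrite leNgt; apply: contraTN wpos => xneg; rewrite -ltNge.
exact: Hneg xn xr xneg vn vx xv.
Qed.

End Linking.

Lemma sumr_others_gt0 (R : numDomainType) (I : finType) (A : {set I}) (F : I -> R) i :
  1 < #|A| -> i \in A -> (forall j, j \in A -> j != i -> 0 < F j)%R ->
  (0 < \sum_(j in A | j != i) F j)%R.
Proof.
move=> A_gt1 Ai F_gt0.
have /set0Pn[j] : A :\ i != set0.
  by rewrite -card_gt0; move: A_gt1; rewrite (cardsD1 i) Ai.
rewrite !inE => /andP[ji Aj]; rewrite (bigD1 j) /= ?Aj ?ji //.
apply: ltr_pwDl (F_gt0 j Aj ji) _; apply: sumr_ge0 => k /andP[/andP[Ak ki] _].
exact/ltW/F_gt0.
Qed.

Theorem lemma3p16 (V : finType) (par : V -> V) (r : V) (arr : {set V})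
    (wt : V -> V -> int) (mult : V -> int)
    (Htree : rooted_tree par r)
    (Harr_val : forall j, j \in arr -> valency par j = 1%N)
    (* (a) near weights positive, far weights nonzero *)
    (Hnear : forall v y, is_node par arr v -> adj par v y -> y != par v ->
               (0 < wt v y)%R)
    (Hfar : forall v, is_node par arr v -> v != r -> wt v (par v) != 0%R)
    (* (b) negative far weight propagates to all nodes beyond *)
    (Hneg : forall v u, is_node par arr v -> v != r -> (wt v (par v) < 0)%R ->
              is_node par arr u -> u != v -> v \in anc par u ->
              (wt u (par u) < 0)%R)
    (* (c) all vertex multiplicities positive *)
    (Hmult_arr : forall j, j \in arr -> (0 < mult j)%R)
    (Hmult_v : forall v, v \notin arr -> (0 < vmult par arr wt mult v)%R)
    (Hnu : (2 <= #|arr|)%N) :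
  forall i, i \in arr -> (selflk par arr wt mult i < 0)%R.
Proof.
move=> i Hi; have i_leaf := Harr_val i Hi.
suff S_gt0 : (0 < \sum_(j in arr | j != i) mult j * lk par arr wt i j)%R.
  by rewrite /selflk mulNr oppr_lt0 divr_gt0 ?ltr0z ?Hmult_arr.
have [far_gt0|[ir vr vn wneg]] :=
  anc_far_gt0_or_par_far_lt0 Htree Harr_val Hfar Hneg i_leaf.
  apply: (sumr_others_gt0 Hnu Hi) => j Hj _; rewrite mulr_gt0 ?Hmult_arr //.
  exact: lk_gt0 Htree Hnear _ _ (arr_not_node par Hi) (arr_not_node par Hj) far_gt0.
have := Hmult_v _ (andP vn).1; rewrite (vmult_par_leaf wt Htree ir i_leaf vn mult Hi).
have self_lt0 : (mult i * lk par arr wt (par i) i < 0)%R.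
  by rewrite pmulr_rlt0 ?Hmult_arr // (lk_par_leaf_self_lt0 Htree Hnear ir).
have wvi_gt0 : (0 < wt (par i) i)%R.
  apply: Hnear vn _ _; first by rewrite adjC (adj_par Htree).
  by rewrite eq_sym (par_par_neq Htree).
move=> Mv_gt0; rewrite -(pmulr_rgt0 _ wvi_gt0).
by apply: lt_trans Mv_gt0 _; rewrite gtrDr.
Qed.
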